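(* Let $G$ and $H$ be connected graphs, each with at least two vertices, such that $\delta(H)>|V(H)|/2$. Let $S\subseteq E(G\times H)$. <ol> <li>If $|S|<\delta(G)\delta(H)$, then every $H$-fiber ${}_xH$ ($x\in V(G)$) is contained in a single connected component of $G\times H-S$.</li> <li>Assume it is not the case that $G\cong K_2$ and $H\cong\overline{K_{2l-1}}\vee lK_2$ for some integer $l\ge1$. Assume also that $|S|=\delta(G)\delta(H)$ and that $S$ is not the set of all edges incident with any single vertex of $G\times H$. Then every $H$-fiber ${}_xH$ is contained in a single connected component of $G\times H-S$.</li> </ol>
   Context: All graphs are finite, simple and undirected. $\delta(\cdot)$ denotes minimum degree. The direct product $G\times H$ has vertex set $V(G)\times V(H)$. Two vertices $(x,u),(y,v)$ are adjacent if and only if $xy\in E(G)$ and $uv\in E(H)$. For $x\in V(G)$, the $H$-fiber is ${}_xH=\{(x,u):u\in V(H)\}$. $\overline{K_{2l-1}}\vee lK_2$ is the join of an edgeless graph on $2l-1$ vertices with a perfect matching on $2l$ vertices. Equivalently, it is $K_{2l-1,2l}$ with $l$ pairwise disjoint edges added inside the part of size $2l$. *)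

(* Simple graphs = symmetric irreflexive boolean relations on a finType. *)
From mathcomp Require Import all_boot.
Set Implicit Arguments. Unset Strict Implicit. Unset Printing Implicit Defensive.

Definition deg (T : finType) (e : rel T) (x : T) : nat := #|[set y | e x y]|.

(* minimum degree (the seed #|T| is an upper bound for every degree, so for
   nonempty T this is exactly the minimum degree) *)
Definition mindeg (T : finType) (e : rel T) : nat :=
  \big[minn/#|T|]_(x : T) deg e x.

Definition gconnected (T : finType) (e : rel T) : Prop :=
  forall x y : T, connect e x y.

Definition dprod_rel (T1 T2 : finType) (e1 : rel T1) (e2 : rel T2) : rel (T1 * T2) :=
  fun p q => e1 p.1 q.1 && e2 p.2 q.2.

Definition edges (T : finType) (e : rel T) : {set {set T}} :=
  [set [set p.1; p.2] | p in [set p : T * T | e p.1 p.2]].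

Definition del_edges (T : finType) (e : rel T) (S : {set {set T}}) : rel T :=
  fun x y => e x y && ([set x; y] \notin S).

Definition incident_edges (T : finType) (e : rel T) (v : T) : {set {set T}} :=
  [set E in edges e | v \in E].

Definition giso (T1 T2 : finType) (e1 : rel T1) (e2 : rel T2) : Prop :=
  exists f : T1 -> T2, bijective f /\ forall x y, e1 x y = e2 (f x) (f y).

Definition K2rel : rel bool := fun x y => x != y.

(* \overline{K_{2l-1}} \vee lK_2 : vertices inl i (i < 2l-1, independent set)
   and inr a (a < 2l, perfect matching {2k, 2k+1}) *)
Definition joinrel (l : nat) : rel ('I_(2 * l - 1) + 'I_(2 * l)) :=
  fun u v => match u, v with
  | inl _, inl _ => false
  | inl _, inr _ => true
  | inr _, inl _ => true
  | inr a, inr b => (a != b) && ((val a)./2 == (val b)./2)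
  end.
Arguments joinrel l : clear implicits.

From mathcomp Require Import all_boot zify.

Set Implicit Arguments.
Unset Strict Implicit.
Unset Printing Implicit Defensive.

(* If (x, u) and (x, v) lie in different components of G x H - S, let C be the
   component of (x, u): every edge leaving C lies in S.  Counted fibre by fibre,
   the edges leaving C between the fibres over adjacent p and q are the darts of
   H from C_p to the complement of C_q.  Since d(H) > |H| / 2, a nontrivial fibre
   C_x forces at least d(H) such darts towards every neighbour of x, whence
   |S| >= d(G) d(H).  In the equality case all these bounds are tight: either a
   neighbour y of x also has a nontrivial fibre, which forces G = K_2 and makes
   the partition (C_x, C_y) exhibit H as the join of an independent set of size
   2l - 1 with a perfect matching on 2l vertices; or all neighbouring fibres are
   empty, resp. all full, and S is the set of edges at (x, u), resp. (x, v). *)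

Definition matched_join (T : finType) (e : rel T) : Prop :=
  exists l, 1 <= l /\ giso (joinrel l) e.

Lemma sum_leq_eq (I : finType) (P : pred I) (f g : I -> nat) :
    (forall i, P i -> f i <= g i) ->
    \sum_(i | P i) g i <= \sum_(i | P i) f i ->
  forall i, P i -> f i = g i.
Proof.
move=> fg gf i Pi; apply/eqP.
have [_] := leqif_sum (fun j Pj => leqif_eq (fg j Pj)).
by rewrite eqn_leq leq_sum // gf => /esym/forall_inP; apply.
Qed.

Section Degrees.
Variables (T : finType) (e : rel T).

Lemma mindeg_leq_deg (x : T) : mindeg e <= deg e x.
Proof.
rewrite /mindeg; have : x \in index_enum T by rewrite mem_index_enum.
elim: (index_enum T) => // y r IH; rewrite inE big_cons => /orP[/eqP <-|/IH].
  exact: geq_minl.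
exact: leq_trans (geq_minr _ _).
Qed.

Lemma deg_lt_card (irr : irreflexive e) (x : T) : deg e x < #|T|.
Proof.
have T0 : 0 < #|T| by apply/card_gt0P; exists x.
rewrite -(prednK T0) ltnS -(cardsC1 x); apply/subset_leq_card/subsetP => y.
by rewrite !inE; apply: contraTneq => ->; rewrite irr.
Qed.

Lemma exists_neighbour (sym : symmetric e) (con : gconnected e) (two : 1 < #|T|) (x : T) :
  exists y, e x y.
Proof.
have [y yx] : exists y, y != x.
  have /card_gt0P[y] : 0 < #|[set~ x]| by rewrite cardsC1 -ltnS prednK // ltnW.
  by rewrite !inE; exists y.
case: (pickP (e x)) => [z exz | none]; first by exists z.
have cl : closed e [set x].
  by move=> p q epq; rewrite !inE; apply/eqP/eqP => [px|qx];
    move: epq; rewrite ?px ?qx ?(sym p) none.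
by move: (closed_connect cl (con x y)); rewrite !inE eqxx (negbTE yx).
Qed.

End Degrees.

Section CutDarts.
Variables (T : finType) (e : rel T).

(* In the product graph, these count the darts leaving a vertex set between two
   of its fibres. *)
Definition cut_darts (A B : {set T}) : nat :=
  \sum_a \sum_b (e a b && (a \in A) && (b \notin B)).

Lemma cut_dartsE (A B : {set T}) :
  cut_darts A B = \sum_(a in A) #|[set b | e a b & b \notin B]|.
Proof.
rewrite /cut_darts [RHS]big_mkcond; apply: eq_bigr => a _.
case: (boolP (a \in A)) => aA; last by rewrite big1 // => b _; rewrite andbF.
rewrite -sum1dep_card [RHS]big_mkcond; apply: eq_bigr => b _.
by rewrite andbT; case: (_ && _).
Qed.

Lemma cut_darts_setC (sym : symmetric e) (A B : {set T}) :
  cut_darts A B = cut_darts (~: B) (~: A).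
Proof.
rewrite /cut_darts exchange_big; apply: eq_bigr => a _; apply: eq_bigr => b _.
by rewrite !inE negbK sym; case: (e a b); case: (a \in B); case: (b \in A).
Qed.

Variable d : nat.
Hypothesis degP : forall a, d <= deg e a.

Lemma neighbours_outside_ge (B : {set T}) (a : T) :
  d - #|B| <= #|[set b | e a b & b \notin B]|.
Proof.
rewrite leq_subLR (leq_trans (degP a)) // (leq_trans _ (leq_card_setU _ _)) //.
by apply/subset_leq_card/subsetP => b; rewrite !inE; case: (b \in B) => //= ->.
Qed.

Lemma cut_darts_ge (A B : {set T}) : #|A| * (d - #|B|) <= cut_darts A B.
Proof.
by rewrite cut_dartsE -sum_nat_const; apply: leq_sum => a _; exact: neighbours_outside_ge.
Qed.

Hypothesis sym : symmetric e.

Lemma cut_darts_ge_setC (A B : {set T}) : #|~: B| * (d - #|~: A|) <= cut_darts A B.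
Proof. by rewrite cut_darts_setC // cut_darts_ge. Qed.

End CutDarts.

Lemma leq_mul_cases (s t g : nat) : s * t <= g -> s = 0 \/ t = 0 \/ s + t <= g + 1.
Proof.
case: s t => [|s] [|t] le_st; [by left | by left | by right; left | right; right].
by move: le_st; rewrite mulSn mulnS; lia.
Qed.

Section DenseCutArithmetic.
Variables (n d a a' b b' g1 g2 : nat).
Hypotheses (dense : n < 2 * d) (d_lt_n : d < n).
Hypotheses (a_gt0 : 0 < a) (a'_gt0 : 0 < a') (aa' : a + a' = n) (bb' : b + b' = n).
Hypotheses (g1_ge : a * (d - b) <= g1) (g1_ge' : b' * (d - a') <= g1).
Hypotheses (g2_ge : b * (d - a) <= g2) (g2_ge' : a' * (d - b') <= g2).

(* Whether [a < d] and whether [b < d] decide which two of the four bounds bite. *)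
Lemma dense_cut_ge : d <= g1 + g2.
Proof.
move: (leq_mul_cases g1_ge) (leq_mul_cases g1_ge') => F1 F2.
move: (leq_mul_cases g2_ge) (leq_mul_cases g2_ge') => F3 F4.
have [ad|ad] := ltnP a d; have [bd|bd] := ltnP b d.
- by clear F2 F4; lia.
- by clear F1 F4; lia.
- by clear F2 F3; lia.
- by clear F1 F3; lia.
Qed.

Lemma dense_cut_tight : 0 < b -> 0 < b' -> g1 + g2 <= d ->
  n = 3 \/ n.+1 = 2 * d /\ (a.+1 = d /\ b = d \/ a = d /\ b.+1 = d).
Proof.
move=> b_gt0 b'_gt0 g_le.
move: (leq_mul_cases g1_ge) (leq_mul_cases g1_ge') => F1 F2.
move: (leq_mul_cases g2_ge) (leq_mul_cases g2_ge') => F3 F4.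
have [ad|ad] := ltnP a d; have [bd|bd] := ltnP b d.
- by clear F2 F4; lia.
- by clear F1 F4; lia.
- by clear F2 F3; lia.
- by clear F1 F3; lia.
Qed.

End DenseCutArithmetic.

Lemma eq_half_odd (a b : nat) :
  (a != b) && (a./2 == b./2) = (a./2 == b./2) && (odd a != odd b).
Proof.
have [h|] := eqVneq a./2 b./2; last by rewrite andbF.
rewrite andbT -{1}[a]odd_double_half -{1}[b]odd_double_half h eqn_add2r.
by case: (odd a); case: (odd b).
Qed.

Section JoinRecognition.
Variables (T : finType) (e : rel T).
Hypotheses (sym : symmetric e) (irr : irreflexive e).
Variable A : {set T}.
Hypothesis matchingC : forall w, w \in ~: A -> #|[set z in ~: A | e w z]| = 1.

Definition partner (w : T) : T := odflt w [pick z in ~: A | e w z].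

Lemma partner_spec w : w \in ~: A -> (partner w \in ~: A) && e w (partner w).
Proof.
move=> wB; rewrite /partner; case: pickP => [z /andP[-> ->] // | none].
have := matchingC wB; rewrite (_ : [set z in ~: A | e w z] = set0) ?cards0 //.
by apply/setP => z; rewrite !inE -in_setC; exact: none.
Qed.

Lemma partner_in w : w \in ~: A -> partner w \in ~: A.
Proof. by case/partner_spec/andP. Qed.

Lemma partner_edge w : w \in ~: A -> e w (partner w).
Proof. by case/partner_spec/andP. Qed.

Lemma partner_unique w z : w \in ~: A -> z \in ~: A -> e w z -> z = partner w.
Proof.
move=> wB zB ewz; have /eqP/cards1P[y def_y] := matchingC wB.
have : z \in [set z in ~: A | e w z] by rewrite inE zB.
have : partner w \in [set z in ~: A | e w z] by rewrite inE partner_in ?partner_edge.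
by rewrite def_y !inE => /eqP -> /eqP ->.
Qed.

Lemma partnerK w : w \in ~: A -> partner (partner w) = w.
Proof. by move=> wB; apply/esym/partner_unique; rewrite ?partner_in // sym partner_edge. Qed.

Lemma partner_neq w : w \in ~: A -> partner w != w.
Proof. by move=> wB; apply: contraTneq (partner_edge wB) => ->; rewrite irr. Qed.

(* One vertex out of each matched pair. *)
Definition reps : {set T} := [set w in ~: A | enum_rank w < enum_rank (partner w)].

Lemma reps_partner w : w \in ~: A -> (partner w \in reps) = (w \notin reps).
Proof.
move=> wB; rewrite !inE -!in_setC wB partner_in // partnerK //= ltnNge leq_eqVlt.
by rewrite (inj_eq (@ord_inj _)) (inj_eq enum_rank_inj) eq_sym (negbTE (partner_neq wB)).
Qed.

Lemma card_setC_reps : #|~: A| = #|reps|.*2.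
Proof.
have repsB w : w \in reps -> w \in ~: A by rewrite inE => /andP[].
have -> : ~: A = reps :|: partner @: reps.
  apply/setP => w; apply/idP/idP => [wB | /setUP[/repsB // | /imsetP[r /repsB rB ->]]].
    rewrite inE; case: (boolP (w \in reps)) => //= wR.
    by apply/imsetP; exists (partner w); rewrite ?partnerK // reps_partner.
  exact: partner_in.
rewrite cardsU card_in_imset => [|r r' /repsB rB /repsB r'B h]; last first.
  by rewrite -(partnerK rB) h partnerK.
rewrite addnn -[RHS]subn0; congr (_ - _); apply/eqP; rewrite cards_eq0.
apply/eqP/setP => w; rewrite in_setI in_set0; apply/negP => /andP[wR /imsetP[r rR def_w]].
by move: wR; rewrite def_w reps_partner ?repsB // rR.
Qed.

Section Embedding.
Variable x0 : T.

Definition pair_vertex (k : nat) (s : bool) : T :=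
  if s then partner (nth x0 (enum reps) k) else nth x0 (enum reps) k.

Lemma nth_reps k : k < #|reps| -> nth x0 (enum reps) k \in reps.
Proof. by move=> kl; rewrite -mem_enum mem_nth // -cardE. Qed.

Lemma nth_reps_setC k : k < #|reps| -> nth x0 (enum reps) k \in ~: A.
Proof. by move/nth_reps; rewrite inE => /andP[]. Qed.

Lemma pair_vertex_in k s : k < #|reps| -> pair_vertex k s \in ~: A.
Proof. by move=> kl; case: s; [apply: partner_in|]; exact: nth_reps_setC. Qed.

Lemma pair_vertex_partner k s :
  k < #|reps| -> partner (pair_vertex k s) = pair_vertex k (~~ s).
Proof. by move=> kl; case: s; rewrite /= ?partnerK ?nth_reps_setC. Qed.

Lemma pair_vertex_inj k k' s s' : k < #|reps| -> k' < #|reps| ->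
  pair_vertex k s = pair_vertex k' s' -> k = k' /\ s = s'.
Proof.
move=> kl k'l; have nth_inj : nth x0 (enum reps) k = nth x0 (enum reps) k' -> k = k'.
  by move/eqP; rewrite nth_uniq ?enum_uniq -?cardE // => /eqP.
case: s; case: s' => /=.
- by move/(congr1 partner); rewrite !partnerK ?nth_reps_setC // => /nth_inj.
- by move=> h; move: (nth_reps k'l); rewrite -h reps_partner ?nth_reps_setC ?nth_reps.
- by move=> h; move: (nth_reps kl); rewrite h reps_partner ?nth_reps_setC ?nth_reps.
- by move/nth_inj.
Qed.

Lemma pair_vertex_edge k k' s s' : k < #|reps| -> k' < #|reps| ->
  e (pair_vertex k s) (pair_vertex k' s') = (k == k') && (s != s').
Proof.
move=> kl k'l; have [<-|kk'] /= := eqVneq k k'.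
  rewrite /pair_vertex; case: s; case: s'; rewrite ?irr //.
    by rewrite sym partner_edge ?nth_reps_setC.
  by rewrite partner_edge ?nth_reps_setC.
apply/negP => /(partner_unique (pair_vertex_in s kl) (pair_vertex_in s' k'l)).
by rewrite pair_vertex_partner // => /esym/pair_vertex_inj[] // /eqP; rewrite (negbTE kk').
Qed.

Hypotheses (indepA : {in A &, forall a a', ~~ e a a'})
  (completeA : {in A & ~: A, forall a b, e a b})
  (cardA : #|A| = 2 * #|reps| - 1).

Definition join_vertex (v : 'I_(2 * #|reps| - 1) + 'I_(2 * #|reps|)) : T :=
  match v with
  | inl i => nth x0 (enum A) i
  | inr a => pair_vertex a./2 (odd a)
  end.

Lemma half_lt_reps (a : 'I_(2 * #|reps|)) : a./2 < #|reps|.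
Proof. by rewrite ltn_half_double -mul2n. Qed.

Lemma join_vertex_inl i : join_vertex (inl i) \in A.
Proof. by rewrite -mem_enum mem_nth // -cardE cardA. Qed.

Lemma join_vertex_inr a : join_vertex (inr a) \in ~: A.
Proof. exact/pair_vertex_in/half_lt_reps. Qed.

Lemma join_vertex_inj : injective join_vertex.
Proof.
have inAC v w : join_vertex v \in A -> join_vertex w \in ~: A -> join_vertex v != join_vertex w.
  by move=> vA wB; apply: contraTneq wB => <-; rewrite inE vA.
case=> [i|a] [j|b] h.
- have sizeA (k : 'I_(2 * #|reps| - 1)) : k < size (enum A) by rewrite -cardE cardA.
  congr inl; apply/val_inj/eqP.
  by rewrite -(nth_uniq x0 (sizeA i) (sizeA j) (enum_uniq _)); apply/eqP.
- by move: (inAC _ _ (join_vertex_inl i) (join_vertex_inr b)); rewrite h eqxx.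
- by move: (inAC _ _ (join_vertex_inl j) (join_vertex_inr a)); rewrite h eqxx.
- have [h2 ho] := pair_vertex_inj (half_lt_reps a) (half_lt_reps b) h.
  by congr inr; apply/val_inj; rewrite /= -[val a]odd_double_half ho h2 odd_double_half.
Qed.

Lemma join_vertex_edge v w : joinrel #|reps| v w = e (join_vertex v) (join_vertex w).
Proof.
case: v w => [i|a] [j|b] /=.
- by apply/esym/negbTE/indepA; exact: join_vertex_inl.
- by apply/esym/completeA; [exact: join_vertex_inl | exact: join_vertex_inr].
- by rewrite sym; apply/esym/completeA; [exact: join_vertex_inl | exact: join_vertex_inr].
- by rewrite pair_vertex_edge ?half_lt_reps // -eq_half_odd.
Qed.

End Embedding.

Lemma matched_join_of_partition :
    {in A &, forall a a', ~~ e a a'} -> {in A & ~: A, forall a b, e a b} ->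
    #|A|.+1 = #|~: A| ->
  matched_join e.
Proof.
move=> indepA completeA cardA.
have /card_gt0P[x0 _] : 0 < #|~: A| by rewrite -cardA.
have reps_gt0 : 0 < #|reps| by rewrite -double_gt0 -card_setC_reps -cardA.
have cardA' : #|A| = 2 * #|reps| - 1 by rewrite mul2n -card_setC_reps -cardA subn1.
exists #|reps|; split => //; exists (join_vertex x0); split; last first.
  by move=> v w; exact: join_vertex_edge.
apply: inj_card_bij; first exact: join_vertex_inj cardA'.
by rewrite card_sum !card_ord -cardA' mul2n -card_setC_reps cardsC.
Qed.

End JoinRecognition.

Section DenseCuts.
Variables (T : finType) (e : rel T) (d : nat).
Hypotheses (sym : symmetric e) (irr : irreflexive e).
Hypotheses (degP : forall a, d <= deg e a) (dense : #|T| < 2 * d).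

Lemma card_gt_mindeg (a : T) : d < #|T|.
Proof. exact: leq_ltn_trans (degP a) (deg_lt_card irr a). Qed.

Lemma cut_darts_sum_ge (A B : {set T}) a c : a \in A -> c \notin A ->
  d <= cut_darts e A B + cut_darts e B A.
Proof.
move=> aA cA.
have A_gt0 : 0 < #|A| by apply/card_gt0P; exists a.
have AC_gt0 : 0 < #|~: A| by apply/card_gt0P; exists c; rewrite inE.
exact: dense_cut_ge dense (card_gt_mindeg a) A_gt0 AC_gt0 (cardsC A) (cardsC B)
  (cut_darts_ge degP A B) (cut_darts_ge_setC degP sym A B)
  (cut_darts_ge degP B A) (cut_darts_ge_setC degP sym B A).
Qed.

(* [K_3] is the case [l = 1]. *)
Lemma matched_join_card3 : #|T| = 3 -> matched_join e.
Proof.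
move=> T3.
have adj a b : a != b -> e a b.
  move=> ab; have /eqP/setP/(_ b) : [set y | e a y] == [set~ a].
    rewrite eqEcard cardsC1 T3 (leq_trans _ (degP a)) ?andbT; last by move: dense; rewrite T3; lia.
    by apply/subsetP => y; rewrite !inE; apply: contraTneq => ->; rewrite irr.
  by rewrite !inE eq_sym ab.
have /card_gt0P[a0 _] : 0 < #|T| by rewrite T3.
apply: (@matched_join_of_partition _ _ sym irr [set a0]).
- move=> w wa0; have <- : #|[set~ a0] :\ w| = 1.
    by have := cardsD1 w [set~ a0]; rewrite wa0 cardsC1 T3; case.
  apply: eq_card => z; rewrite !inE; case: (eqVneq z w) => [->|zw]; first by rewrite irr andbF.
  by rewrite adj 1?eq_sym // andbT.
- by move=> a a'; rewrite !inE => /eqP-> /eqP->; rewrite irr.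
- by move=> a b; rewrite !inE => /eqP-> ba0; rewrite adj // eq_sym.
- by rewrite cards1 cardsC1 T3.
Qed.

Lemma matched_join_of_tight_cut (A B : {set T}) :
    #|A|.+1 = d -> #|B| = d -> #|T|.+1 = 2 * d ->
    cut_darts e A B + cut_darts e B A <= d ->
  matched_join e.
Proof.
move=> cardA cardB cardT tight.
pose row w := #|[set z | e w z & z \notin A]|.
have row_ge1 w : 1 <= row w.
  by have := neighbours_outside_ge degP A w; rewrite -cardA subSnn.
have cutBA : d <= cut_darts e B A.
  by rewrite cut_dartsE -cardB -sum1_card; apply: leq_sum => w _; exact: row_ge1.
have cutAB : cut_darts e A B == 0 by rewrite -leqn0; lia.
have outA a b : a \in A -> e a b -> b \in B.
  move=> aA eab; move: cutAB; rewrite cut_dartsE sum_nat_eq0 => /forall_inP/(_ a aA).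
  by rewrite cards_eq0 => /eqP/setP/(_ b); rewrite !inE eab /= => /negbFE.
have completeA a b : a \in A -> b \in B -> e a b.
  move=> aA bB; have /eqP/setP/(_ b) : [set y | e a y] == B.
    by rewrite eqEcard cardB degP andbT; apply/subsetP => y; rewrite inE; exact: outA.
  by rewrite inE bB.
have BE : B = ~: A.
  apply/eqP; rewrite eqEcard; apply/andP; split; last by have := cardsC A; lia.
  by apply/subsetP => b bB; rewrite inE; apply/negP => bA; have := completeA b b bA bB; rewrite irr.
have rows w : w \in B -> 1 = row w.
  apply: sum_leq_eq => [{}w _|]; first exact: row_ge1.
  by rewrite sum1_card cardB -cut_dartsE; lia.
rewrite {}BE in cardB rows outA completeA.
apply: (@matched_join_of_partition _ _ sym irr A) => //; last by rewrite cardA cardB.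
- by move=> w /rows ->; apply: eq_card => z; rewrite !inE andbC.
- by move=> a a' aA a'A; apply: contraTN a'A => /(outA _ _ aA); rewrite inE.
Qed.

Lemma matched_join_of_cut_darts_sum (A B : {set T}) a c b c' :
    a \in A -> c \notin A -> b \in B -> c' \notin B ->
    cut_darts e A B + cut_darts e B A <= d ->
  matched_join e.
Proof.
move=> aA cA bB cB tight.
have A_gt0 : 0 < #|A| by apply/card_gt0P; exists a.
have AC_gt0 : 0 < #|~: A| by apply/card_gt0P; exists c; rewrite inE.
have B_gt0 : 0 < #|B| by apply/card_gt0P; exists b.
have BC_gt0 : 0 < #|~: B| by apply/card_gt0P; exists c'; rewrite inE.
have [T3|[cardT [[cardA cardB]|[cardA cardB]]]] :=
  dense_cut_tight dense (card_gt_mindeg a) A_gt0 AC_gt0 (cardsC A) (cardsC B)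
    (cut_darts_ge degP A B) (cut_darts_ge_setC degP sym A B)
    (cut_darts_ge degP B A) (cut_darts_ge_setC degP sym B A) B_gt0 BC_gt0 tight.
- exact: matched_join_card3.
- exact: matched_join_of_tight_cut cardA cardB cardT tight.
- by apply: matched_join_of_tight_cut cardB cardA cardT _; rewrite addnC.
Qed.

End DenseCuts.

Lemma disconnected_cut (T : finType) (r : rel T) (S : {set {set T}}) (w1 w2 : T) :
    ~~ connect (del_edges r S) w1 w2 ->
  exists C : {set T}, [/\ w1 \in C, w2 \notin C &
    forall z1 z2, z1 \in C -> z2 \notin C -> r z1 z2 -> [set z1; z2] \in S].
Proof.
move=> nc; exists [set z | connect (del_edges r S) w1 z]; split; rewrite ?inE ?connect0 //.
move=> z1 z2; rewrite !inE => c1 c2 r12; apply: contraNT c2 => nS.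
by apply: connect_trans c1 (connect1 _); rewrite /del_edges r12.
Qed.

Lemma giso_K2 (T : finType) (e : rel T) (x y : T) :
    symmetric e -> irreflexive e -> gconnected e -> e x y ->
    (forall z, e x z -> z = y) -> (forall z, e y z -> z = x) ->
  giso K2rel e.
Proof.
move=> sym irr con exy xN yN; have yx : y != x by apply: contraTneq exy => ->; rewrite irr.
have nbr p q : e p q -> (p == x) || (p == y) -> (q == x) || (q == y).
  by move=> epq /orP[] /eqP def; move: epq; rewrite def;
    [move/xN | move/yN] => ->; rewrite eqxx ?orbT.
have cl : closed e [set x; y].
  by move=> p q epq; rewrite !inE; apply/idP/idP; apply: nbr; rewrite // sym.
have xy_all w : (w == x) || (w == y).
  by rewrite -in_set2 -(closed_connect cl (con x w)) set21.
exists (fun b : bool => if b then x else y); split.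
  exists (fun w => w == x) => [[]|w] /=; rewrite ?eqxx ?(negbTE yx) //.
  by case: (eqVneq w x) (xy_all w) => //= _ /eqP.
by move=> [] []; rewrite /K2rel /= ?irr ?exy // sym.
Qed.

Lemma set0_or_setT (T : finType) (A : {set T}) :
  ~~ ([exists b, b \in A] && [exists b, b \notin A]) -> A = set0 \/ A = setT.
Proof.
case: (boolP [exists b, b \in A]) => [_ /= /existsPn AT | /existsPn A0 _].
  by right; apply/setP => b; move: (AT b); rewrite negbK inE => ->.
by left; apply/setP => b; rewrite inE; exact/negbTE/A0.
Qed.

Section ProductCuts.
Variables (TG TH : finType) (eG : rel TG) (eH : rel TH).
Local Notation eGH := (dprod_rel eG eH).

Definition fibre (C : {set TG * TH}) (p : TG) : {set TH} := [set a | (p, a) \in C].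

Definition fibre_cut (C : {set TG * TH}) : nat :=
  \sum_p \sum_q eG p q * cut_darts eH (fibre C p) (fibre C q).

Definition leaving_darts (C : {set TG * TH}) : {set (TG * TH) * (TG * TH)} :=
  [set w | eGH w.1 w.2 && (w.1 \in C) && (w.2 \notin C)].

Lemma fibre_cutE (C : {set TG * TH}) : fibre_cut C = #|leaving_darts C|.
Proof.
rewrite -sum1dep_card big_mkcond /=.
transitivity (\sum_(p : TG) \sum_(a : TH) \sum_(w2 : TG * TH)
    (eGH (p, a) w2 && ((p, a) \in C) && (w2 \notin C) : nat)); last first.
  rewrite pair_bigA pair_bigA; apply: eq_bigr => -[[p a] w2] _ /=.
  by case: ifP.
apply: eq_bigr => p _.
transitivity (\sum_(q : TG) \sum_(a : TH) \sum_(b : TH)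
    (eGH (p, a) (q, b) && ((p, a) \in C) && ((q, b) \notin C) : nat)); last first.
  by rewrite [LHS]exchange_big; apply: eq_bigr => a _; rewrite pair_bigA; apply: eq_bigr => -[].
apply: eq_bigr => q _; rewrite /cut_darts big_distrr; apply: eq_bigr => a _.
rewrite big_distrr; apply: eq_bigr => b _; rewrite /dprod_rel /= !inE.
by case: (eG p q); case: (eH a b); case: ((p, a) \in C); case: ((q, b) \in C).
Qed.

Lemma fibre_cut_leq (C : {set TG * TH}) (S : {set {set TG * TH}}) :
    (forall w1 w2, w1 \in C -> w2 \notin C -> eGH w1 w2 -> [set w1; w2] \in S) ->
  fibre_cut C <= #|S|.
Proof.
move=> cutS; rewrite fibre_cutE.
have inj : {in leaving_darts C &, injective (fun w => [set w.1; w.2])}.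
  move=> [w1 w2] [w3 w4]; rewrite !inE /= => /andP[/andP[_ c1] c2] /andP[/andP[_ c3] c4] h.
  have e1 : w1 = w3.
    have : w1 \in [set w3; w4] by rewrite -h set21.
    by rewrite !inE => /orP[/eqP //|/eqP e]; move: c4; rewrite -e c1.
  have e2 : w2 = w4.
    have : w2 \in [set w3; w4] by rewrite -h set22.
    by rewrite !inE => /orP[/eqP e|/eqP //]; move: c3; rewrite -e (negbTE c2).
  by rewrite e1 e2.
rewrite -(card_in_imset inj); apply/subset_leq_card/subsetP => _ /imsetP[[w1 w2] + ->].
by rewrite inE /= => /andP[/andP[e12 c1] c2]; exact: cutS.
Qed.

Definition fibre_cross (C : {set TG * TH}) (x q : TG) : nat :=
  cut_darts eH (fibre C x) (fibre C q) + cut_darts eH (fibre C q) (fibre C x).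

Definition fibre_cut_off (C : {set TG * TH}) (x : TG) : nat :=
  \sum_(p | p != x) \sum_(q | q != x) eG p q * cut_darts eH (fibre C p) (fibre C q).

Lemma fibre_cut_split (symG : symmetric eG) (irrG : irreflexive eG) C x :
  fibre_cut C = \sum_(q | eG x q) fibre_cross C x q + fibre_cut_off C x.
Proof.
rewrite /fibre_cut (bigD1 x) //=.
have -> : \sum_(p | p != x) \sum_q eG p q * cut_darts eH (fibre C p) (fibre C q) =
    \sum_q eG x q * cut_darts eH (fibre C q) (fibre C x) + fibre_cut_off C x.
  rewrite [X in X + _](bigD1 x) //= irrG mul0n add0n -big_split /=.
  by apply: eq_bigr => p _; rewrite (bigD1 x) //= symG.
rewrite addnA -big_split [in RHS]big_mkcond; congr (_ + _); apply: eq_bigr => q _.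
by case: (eG x q); rewrite /= ?mul1n ?mul0n.
Qed.

Lemma fibre_cut_off_ge C x p q : p != x -> q != x ->
  eG p q * cut_darts eH (fibre C p) (fibre C q) <= fibre_cut_off C x.
Proof. by move=> px qx; rewrite /fibre_cut_off (bigD1 p) //= (bigD1 q) //= -addnA leq_addr. Qed.

Lemma incident_edges_card (irrG : irreflexive eG) x a :
  deg eG x * deg eH a <= #|incident_edges eGH (x, a)|.
Proof.
rewrite /deg -cardsX.
have inj : {in setX [set y | eG x y] [set b | eH a b] &, injective (fun w => [set (x, a); w])}.
  move=> [q1 b1] [q2 b2]; rewrite !in_setX !inE => /andP[e1 _] /andP[e2 _] h.
  have : (q1, b1) \in [set (x, a); (q2, b2)] by rewrite -h set22.
  by rewrite !inE => /orP[/eqP[qx _]|/eqP //]; move: e1; rewrite qx irrG.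
rewrite -(card_in_imset inj); apply/subset_leq_card/subsetP => _ /imsetP[[q b] + ->].
rewrite in_setX !inE => /andP[exq eab]; rewrite eqxx andbT.
by apply/imsetP; exists ((x, a), (q, b)); rewrite // inE /dprod_rel /= exq eab.
Qed.

Lemma incident_edges_subset (symG : symmetric eG) (symH : symmetric eH)
    (S : {set {set TG * TH}}) x a :
    (forall q b, eG x q -> eH a b -> [set (x, a); (q, b)] \in S) ->
  incident_edges eGH (x, a) \subset S.
Proof.
move=> xaS; apply/subsetP => E; rewrite inE => /andP[/imsetP[[w1 w2] + ->]].
rewrite inE /dprod_rel /= => /andP[e1 e2]; rewrite !inE => /orP[]/eqP def.
  by move: def e1 e2 => <-; case: w2 => q b; apply: xaS.
by rewrite setUC; move: def e1 e2 => <-; case: w1 => q b e1 e2; apply: xaS; rewrite 1?symG 1?symH.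
Qed.

End ProductCuts.

Section FibreSeparation.
Variables (TG TH : finType) (eG : rel TG) (eH : rel TH).
Hypotheses (symG : symmetric eG) (irrG : irreflexive eG).
Hypotheses (symH : symmetric eH) (irrH : irreflexive eH).
Hypotheses (conG : gconnected eG) (twoG : 1 < #|TG|).
Hypothesis denseH : #|TH| < 2 * mindeg eH.
Variable S : {set {set TG * TH}}.
Variables (C : {set TG * TH}) (x : TG) (u v : TH).
Hypotheses (uC : (x, u) \in C) (vC : (x, v) \notin C).
Hypothesis cutS : forall w1 w2,
  w1 \in C -> w2 \notin C -> dprod_rel eG eH w1 w2 -> [set w1; w2] \in S.

Local Notation dG := (mindeg eG).
Local Notation dH := (mindeg eH).
Local Notation degH := (mindeg_leq_deg eH).
Local Notation cut_split := (@fibre_cut_split _ _ eG eH symG irrG C x).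

Lemma mindeg_gt0 : 0 < dH.
Proof. by move: denseH; rewrite lt0n; apply: contraTneq => ->. Qed.

Lemma fibre_cross_ge q : dH <= fibre_cross eH C x q.
Proof. by apply: (cut_darts_sum_ge symH irrH degH denseH _ (a := u) (c := v)); rewrite inE. Qed.

Lemma fibre_cross_sum_ge : dG * dH <= \sum_(q | eG x q) fibre_cross eH C x q.
Proof.
rewrite (leq_trans (leq_mul (mindeg_leq_deg eG x) (leqnn dH))) // -sum_nat_cond_const.
by apply: leq_sum => q _; exact: fibre_cross_ge.
Qed.

Lemma fibre_cut_ge : dG * dH + fibre_cut_off eG eH C x <= #|S|.
Proof.
by rewrite (leq_trans _ (fibre_cut_leq cutS)) // cut_split leq_add2r fibre_cross_sum_ge.
Qed.

Section Tight.
Hypothesis tightS : #|S| = dG * dH.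

Lemma fibre_cut_off_eq0 : fibre_cut_off eG eH C x = 0.
Proof. by apply/eqP; move: fibre_cut_ge; rewrite tightS -{2}[dG * dH]addn0 leq_add2l leqn0. Qed.

Lemma cut_darts_off_eq0 p q : p != x -> q != x -> eG p q ->
  cut_darts eH (fibre C p) (fibre C q) = 0.
Proof.
move=> px qx epq; apply/eqP; rewrite -leqn0 -fibre_cut_off_eq0.
by have := fibre_cut_off_ge eG eH C px qx; rewrite epq mul1n.
Qed.

Lemma fibre_cross_sum_leq : \sum_(q | eG x q) fibre_cross eH C x q <= dG * dH.
Proof. by rewrite -tightS (leq_trans _ (fibre_cut_leq cutS)) // cut_split leq_addr. Qed.

Lemma fibre_cross_eq q : eG x q -> fibre_cross eH C x q = dH.
Proof.
move=> xq; apply/esym/(sum_leq_eq (f := fun=> dH) _ _ xq) => [q' _|].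
  exact: fibre_cross_ge.
rewrite sum_nat_cond_const (leq_trans fibre_cross_sum_leq) //.
by rewrite leq_mul2r mindeg_leq_deg orbT.
Qed.

Lemma deg_leq_mindeg : deg eG x <= dG.
Proof.
rewrite -(leq_pmul2r mindeg_gt0) /deg -sum_nat_cond_const (leq_trans _ fibre_cross_sum_leq) //.
by apply: leq_sum => q _; exact: fibre_cross_ge.
Qed.

Lemma incident_edges_eq a :
    (forall q b, eG x q -> eH a b -> [set (x, a); (q, b)] \in S) ->
  S = incident_edges (dprod_rel eG eH) (x, a).
Proof.
move=> xaS; apply/eqP; rewrite eq_sym eqEcard incident_edges_subset //= tightS.
by rewrite (leq_trans _ (incident_edges_card _ irrG _ _)) // leq_mul ?mindeg_leq_deg.
Qed.

Lemma K2_join_of_nontrivial_fibre y b b' :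
  eG x y -> b \in fibre C y -> b' \notin fibre C y -> giso K2rel eG /\ matched_join eH.
Proof.
move=> xy yb yb'; have yx : y != x by apply: contraTneq xy => ->; rewrite irrG.
have yN z : eG y z -> z = x.
  move=> yz; apply/eqP; apply: contraTT mindeg_gt0 => zx.
  have := cut_darts_sum_ge symH irrH degH denseH (fibre C z) yb yb'.
  by rewrite !cut_darts_off_eq0 // 1?symG // leqn0 => /eqP->.
have degx1 : deg eG x <= 1.
  apply: leq_trans deg_leq_mindeg (leq_trans (mindeg_leq_deg eG y) _).
  by rewrite -(cards1 x); apply/subset_leq_card/subsetP => w; rewrite !inE => /yN ->.
have xN z : eG x z -> z = y.
  move=> xz; apply/eqP; apply: contraTT degx1 => zy.
  by rewrite -ltnNge /deg (cardD1 y) (cardD1 z) !inE xy xz zy.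
split; first exact: giso_K2 xy xN yN.
apply: (matched_join_of_cut_darts_sum symH irrH degH denseH (A := fibre C x)
  (a := u) (c := v) _ _ yb yb'); rewrite ?inE //.
by rewrite -/(fibre_cross eH C x y) fibre_cross_eq.
Qed.

Lemma incident_edges_of_trivial_fibres :
    (forall q, eG x q -> fibre C q = set0 \/ fibre C q = setT) ->
  exists w, S = incident_edges (dprod_rel eG eH) w.
Proof.
move=> trivial; have [y xy] := exists_neighbour symG conG twoG x.
have mixed q q' : eG x q -> eG x q' -> fibre C q = set0 -> fibre C q' = setT -> False.
  move=> xq xq' q0 q'T.
  (* Both crossings would be tight, yet together they need [|H| d(H)] darts. *)
  have := leq_add (cut_darts_ge degH (fibre C x) (fibre C q))
    (cut_darts_ge_setC degH symH (fibre C q') (fibre C x)).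
  rewrite q0 q'T setCT cards0 subn0 -mulnDl cardsC.
  have := fibre_cross_eq xq; have := fibre_cross_eq xq'; rewrite /fibre_cross q0 q'T.
  move=> h h' le; have : #|TH| * dH <= 2 * dH by lia.
  rewrite leq_pmul2r ?mindeg_gt0 //; have := card_gt_mindeg irrH degH u; lia.
have [y0|yT] := trivial y xy.
- exists (x, u); apply: incident_edges_eq => q b xq ub.
  have q0 : fibre C q = set0 by case: (trivial q xq) => // /(mixed y q xy xq y0) [].
  apply: cutS => //; last by rewrite /dprod_rel /= xq ub.
  by move/setP: q0 => /(_ b); rewrite !inE => ->.
- exists (x, v); apply: incident_edges_eq => q b xq vb.
  have qT : fibre C q = setT by case: (trivial q xq) => // /(mixed q y xq xy)/(_ yT) [].
  rewrite setUC; apply: cutS => //; last by rewrite /dprod_rel /= symG xq symH vb.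
  by move/setP: qT => /(_ b); rewrite !inE.
Qed.

End Tight.
End FibreSeparation.

Theorem lemma2 (TG TH : finType) (eG : rel TG) (eH : rel TH)
  (symG : symmetric eG) (irrG : irreflexive eG)
  (symH : symmetric eH) (irrH : irreflexive eH)
  (conG : gconnected eG) (conH : gconnected eH)
  (twoG : 2 <= #|TG|) (twoH : 2 <= #|TH|)
  (degH : #|TH| < 2 * mindeg eH)
  (S : {set {set (TG * TH)}})
  (HS : S \subset edges (dprod_rel eG eH)) :
  (#|S| < mindeg eG * mindeg eH ->
     forall (x : TG) (u v : TH),
       connect (del_edges (dprod_rel eG eH) S) (x, u) (x, v))
  /\
  (~ (giso K2rel eG /\ exists l : nat, 1 <= l /\ giso (joinrel l) eH) ->
   #|S| = mindeg eG * mindeg eH ->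
   (forall w : TG * TH, S != incident_edges (dprod_rel eG eH) w) ->
     forall (x : TG) (u v : TH),
       connect (del_edges (dprod_rel eG eH) S) (x, u) (x, v)).
Proof.
split=> [small | notK2join tightS notstar] x u v;
  apply/negbNE/negP => /disconnected_cut[C [uC vC cutS]].
  have := fibre_cut_ge symG irrG symH irrH degH uC vC cutS.
  by rewrite leqNgt (leq_trans small) ?leq_addr.
pose nontrivial y := [exists b, b \in fibre C y] && [exists b, b \notin fibre C y].
case: (pickP [pred y | eG x y && nontrivial y]) => [y /andP[xy] | trivial].
  case/andP=> /existsP[b yb] /existsP[b' yb']; apply: notK2join.
  by have [] := K2_join_of_nontrivial_fibre symG irrG symH irrH conG degH uC vC cutS
    tightS xy yb yb'.
have trivial_nbr q : eG x q -> fibre C q = set0 \/ fibre C q = setT.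
  move=> xq; apply: set0_or_setT; apply/negP => ntq.
  by move: (trivial q); rewrite /= xq /nontrivial ntq.
have [w Sw] := incident_edges_of_trivial_fibres symG irrG symH irrH conG twoG degH uC vC cutS
  tightS trivial_nbr.
by move: (notstar w); rewrite Sw eqxx.
Qed.
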